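(* Let $\mu$ be in the relative interior of $\Delta$. If an updating rule respects the Blackwell order for $\mu$ and $\varphi^{\mu}(\mu)\neq\mu$, then there exists $x\neq\mu$ at which $\varphi^{\mu}$ has an expansive error.
   Context: Let $\Theta$ be a finite set of states, $|\Theta|=n\ge2$, and $\Delta=\Delta(\Theta)$ the simplex of beliefs. An experiment $\pi:\Theta\to\Delta(S)$ ($S$ finite) with prior $\mu$ induces the Bayesian distribution over posteriors $\rho_B$, a finitely supported distribution on $\Delta$ with mean $\mu$ (every such distribution arises from some experiment). Blackwell order: $\pi\succeq\pi'$ iff $\rho_B'$ is a mean-preserving contraction of $\rho_B$. An updating rule is given, for each prior $\mu$, by a distortion function $\varphi^{\mu}:\Delta\to\Delta$: when the Bayesian posterior is $x$, the decision maker holds belief $\varphi^{\mu}(x)$. For a compact action set $A$, continuous $u:A\times\Theta\to\mathbb{R}$, and consistent choice $a^*:\Delta\to A$ (i.e. $a^*(y)\in\arg\max_{a}\mathbb{E}_y u(a,\theta)$ for all $y$), let $W(x)=\mathbb{E}_x u(a^*(\varphi^{\mu}(x)),\theta)$. The rule respects the Blackwell order for $\mu$ if for all such $A,u,a^*$ and all $\pi\succeq\pi'$, $\mathbb{E}_{\rho_B}W\ge\mathbb{E}_{\rho_B'}W$. $\varphi^{\mu}$ has an expansive error at $x$ if $\varphi^{\mu}(x)$ does not lie on the closed line segment between $x$ and $\mu$. *)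

(* States Theta = 'I_n, beliefs = functions 'I_n -> R. *)
From HB Require Import structures.
From mathcomp Require Import all_boot all_order all_algebra.
From mathcomp Require Import all_classical all_reals all_analysis.
Set Implicit Arguments. Unset Strict Implicit. Unset Printing Implicit Defensive.
Import Order.TTheory GRing.Theory Num.Theory.
Import numFieldNormedType.Exports.
Local Open Scope ring_scope.

Section Defs.
Variables (R : realType) (n : nat).

Definition belief := 'I_n -> R.

Definition in_simplex (x : belief) : Prop :=
  (forall i, 0 <= x i) /\ \sum_(i < n) x i = 1.

Definition in_relint (x : belief) : Prop :=
  in_simplex x /\ (forall i, 0 < x i).

(* a finitely supported distribution over beliefs, given by finitely many
   (weight, point) atoms (duplicates / zero weights allowed) *)
Record fdist := FDist {
  fd_size : nat;
  fd_w : 'I_fd_size -> R;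
  fd_pt : 'I_fd_size -> belief }.

Arguments fd_w : clear implicits.
Arguments fd_pt : clear implicits.

(* rho is a finitely supported distribution on the simplex with mean mu
   (= Bayesian distribution of posteriors of some experiment at prior mu) *)
Definition is_post_dist (mu : belief) (rho : fdist) : Prop :=
  [/\ (forall k, 0 <= fd_w rho k),
      \sum_k fd_w rho k = 1,
      (forall k, in_simplex (fd_pt rho k)) &
      (forall th, \sum_k fd_w rho k * fd_pt rho k th = mu th)].

(* rho' is a mean-preserving contraction of rho: there is a Markov kernel
   K (from atoms of rho' to atoms of rho) such that rho = rho' K and the
   conditional mean of rho given each atom y_j of rho' is y_j. *)
Definition mpc (rho' rho : fdist) : Prop :=
  exists K : 'I_(fd_size rho') -> 'I_(fd_size rho) -> R,
    [/\ (forall j k, 0 <= K j k),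
        (forall j, \sum_k K j k = 1),
        (forall k, fd_w rho k = \sum_j fd_w rho' j * K j k) &
        (forall j th, \sum_k fd_w rho' j * K j k * fd_pt rho k th
                      = fd_w rho' j * fd_pt rho' j th)].

Definition expect (rho : fdist) (f : belief -> R) : R :=
  \sum_k fd_w rho k * f (fd_pt rho k).

Definition EU (y : belief) (v : 'I_n -> R) : R := \sum_(th < n) y th * v th.

Definition respects_blackwell (phi : belief -> belief) (mu : belief) : Prop :=
  forall (A : topologicalType) (u : A -> 'I_n -> R) (astar : belief -> A),
    compact [set: A] ->
    (forall th, continuous (fun a => u a th)) ->
    (forall y, in_simplex y -> forall a, EU y (u a) <= EU y (u (astar y))) ->
    forall rho rho' : fdist,
      is_post_dist mu rho -> is_post_dist mu rho' -> mpc rho' rho ->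
      expect rho' (fun x => EU x (u (astar (phi x))))
        <= expect rho (fun x => EU x (u (astar (phi x)))).

Definition expansive_error (phi : belief -> belief) (mu x : belief) : Prop :=
  ~ (exists t : R, 0 <= t <= 1 /\ phi x = (fun i => t * x i + (1 - t) * mu i)).

End Defs.

(* Suppose phi has no expansive error away from mu, and let y := phi mu <> mu.
   Consider the problem "bet on y - mu or abstain", calibrated so that betting
   is optimal exactly at the beliefs mu + r (y - mu) with r > 1/2.  Posteriors
   mu + r (y - mu) with r < 0 are distorted only towards mu, so the decision
   maker abstains there and gets 0; at the posterior mu he believes y, bets,
   and loses.  So splitting the posterior mu - s (y - mu), s > 0 small, into
   mu and mu - 2 s (y - mu) is a Blackwell improvement that strictly lowers
   the value. *)

From mathcomp Require Import all_boot all_order all_algebra.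
From mathcomp Require Import all_classical all_reals all_analysis.
From mathcomp Require Import ring lra.
Import Order.TTheory GRing.Theory Num.Theory.
Import numFieldNormedType.Exports.
Set Implicit Arguments.
Unset Strict Implicit.
Unset Printing Implicit Defensive.
Local Open Scope ring_scope.

Section Beliefs.
Variables (R : realType) (n : nat).
Implicit Types (x y z : belief R n) (w g : 'I_n -> R).

Lemma neq_exists_coord x y : x <> y -> exists i, x i != y i.
Proof.
move=> xy; apply: contrapT => /forallNP xy_eq; apply: xy; apply/funext => i.
by have /negP/negPn/eqP := xy_eq i.
Qed.

Lemma pos_lower_bound x :
  (forall i, 0 < x i) -> exists2 m : R, 0 < m <= 1 & forall i, m <= x i.
Proof.
move=> x_gt0; exists (\big[Order.min/1]_i x i); last by move=> i; apply: bigmin_le.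
rewrite bigmin_le_id andbT.
by apply: (big_ind (fun a => 0 < a)) => // a b; rewrite lt_min => ->.
Qed.

Definition mix x y (r : R) : belief R n := fun i => (1 - r) * x i + r * y i.

Lemma mix0 x y : mix x y 0 = x.
Proof. by apply/funext => i; rewrite /mix; ring. Qed.

Lemma mix1 x y : mix x y 1 = y.
Proof. by apply/funext => i; rewrite /mix; ring. Qed.

Lemma mix_shrink x y (r t : R) :
  (fun i => t * mix x y r i + (1 - t) * x i) = mix x y (t * r).
Proof. by apply/funext => i; rewrite /mix; ring. Qed.

Lemma mix_eq_left x y (r : R) : x <> y -> mix x y r = x -> r = 0.
Proof.
move=> /neq_exists_coord[i xyi] rx.
have : r * (x i - y i) = 0.
  by have := congr1 (fun f => x i - f i) rx; rewrite subrr /mix => <-; ring.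
by move/eqP; rewrite mulf_eq0 subr_eq0 (negbTE xyi) orbF => /eqP.
Qed.

Lemma simplex_le1 {x} : in_simplex x -> forall i, x i <= 1.
Proof.
by move=> [x0 <-] i; rewrite (bigD1 i) //= lerDl; apply: sumr_ge0.
Qed.

Lemma mix_in_simplex x y (m r : R) :
  in_simplex x -> in_simplex y -> (forall i, m <= x i) -> - m <= r <= 1 ->
  in_simplex (mix x y r).
Proof.
move=> xS yS xm /andP[mr r1]; have [x0 x1] := xS; have [y0 y1] := yS; split.
  move=> i; have := simplex_le1 yS i; have := x0 i; have := y0 i; have := xm i.
  rewrite /mix; case: (lerP 0 r); nra.
by rewrite /mix big_split /= -!mulr_sumr x1 y1; ring.
Qed.

Lemma EU_mix x y (r : R) w : EU (mix x y r) w = (1 - r) * EU x w + r * EU y w.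
Proof.
rewrite /EU !mulr_sumr -big_split /=.
by apply: eq_bigr => i _; rewrite /mix; ring.
Qed.

Lemma EU_subr_cst z w (c : R) :
  EU z (fun i => w i - c) = EU z w - c * \sum_i z i.
Proof.
by rewrite /EU mulr_sumr -sumrB; apply: eq_bigr => i _; ring.
Qed.

Definition sqdist x y : R := \sum_i (y i - x i) ^+ 2.

Lemma sqdist_gt0 x y : x <> y -> 0 < sqdist x y.
Proof.
move=> /neq_exists_coord[i xyi]; rewrite /sqdist (bigD1 i) //=.
apply: ltr_pwDl; last by apply: sumr_ge0 => j _; apply: sqr_ge0.
by rewrite exprn_even_gt0 //= subr_eq0 eq_sym.
Qed.

(* The payoff [y - x], recentred so that its expectation vanishes at the
   midpoint of [x, y]. *)
Definition sep_payoff x y : 'I_n -> R :=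
  let v i := y i - x i in fun i => v i - (EU x v + EU y v) / 2.

Lemma EU_sep_payoff_mix x y (r : R) : in_simplex x -> in_simplex y ->
  EU (mix x y r) (sep_payoff x y) = sqdist x y * (r - 1 / 2).
Proof.
move=> [_ x1] [_ y1]; rewrite /sep_payoff EU_subr_cst EU_mix.
have -> : \sum_i mix x y r i = 1.
  by rewrite /mix big_split /= -!mulr_sumr x1 y1; ring.
have -> : sqdist x y = EU y (fun i => y i - x i) - EU x (fun i => y i - x i).
  by rewrite /sqdist /EU -sumrB; apply: eq_bigr => i _; ring.
by field.
Qed.

Definition bet g (a : bool) : 'I_n -> R := if a then g else fun=> 0.

Definition bet_choice g z : bool := 0 < EU z g.

Lemma EU_bet z g (a : bool) : EU z (bet g a) = if a then EU z g else 0.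
Proof. by case: a => //; rewrite /EU big1 // => i _; rewrite mulr0. Qed.

Lemma bet_choice_optimal g z (a : bool) :
  EU z (bet g a) <= EU z (bet g (bet_choice g z)).
Proof. by rewrite !EU_bet /bet_choice; case: a; case: ltP => // /ltW. Qed.

Lemma bet_continuous g i : continuous (fun a => bet g a i).
Proof. by apply/continuousP => A _; apply: discrete_open. Qed.

Lemma bet_choice_sep_mix x y (r : R) : in_simplex x -> in_simplex y -> x <> y ->
  bet_choice (sep_payoff x y) (mix x y r) = (1 / 2 < r).
Proof.
move=> xS yS xy; rewrite /bet_choice EU_sep_payoff_mix //.
by rewrite pmulr_rgt0 ?sqdist_gt0 // subr_gt0.
Qed.

End Beliefs.

Section BlackwellSplit.
Variables (R : realType) (n : nat) (mu p q z : belief R n).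
Hypotheses (muS : in_simplex mu) (pS : in_simplex p) (qS : in_simplex q)
  (zS : in_simplex z).
Hypotheses (pq_mu : forall i, p i + q i = 2 * mu i)
  (muz_q : forall i, mu i + z i = 2 * q i).

Definition split_coarse : fdist R n :=
  @FDist R n 2 (fun=> 1 / 2) (fun k => nth p [:: p; q] k).

Definition split_fine : fdist R n :=
  @FDist R n 3 (fun k => nth 0 [:: 1 / 2; 1 / 4; 1 / 4] k)
    (fun k => nth p [:: p; mu; z] k).

Lemma split_coarse_post_dist : is_post_dist mu split_coarse.
Proof.
split=> /= [k||k|th]; rewrite ?big_ord_recr ?big_ord0 /=.
- lra.
- lra.
- by case: k => [[|[|k]] hk].
- by have := pq_mu th; lra.
Qed.

Lemma split_fine_post_dist : is_post_dist mu split_fine.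
Proof.
split=> /= [k||k|th]; rewrite ?big_ord_recr ?big_ord0 /=.
- by case: k => [[|[|[|k]]] hk] //=; lra.
- lra.
- by case: k => [[|[|[|k]]] hk].
- by have := pq_mu th; have := muz_q th; lra.
Qed.

Lemma split_mpc : mpc split_coarse split_fine.
Proof.
exists (fun j k => nth 0 (nth [::] [:: [:: 1; 0; 0]; [:: 0; 1 / 2; 1 / 2]] j) k).
split=> /= [j k|j|k|j th]; rewrite ?big_ord_recr ?big_ord0 /=.
- by case: j => [[|[|j]] hj]; case: k => [[|[|[|k]]] hk] //=; lra.
- by case: j => [[|[|j]] hj] //=; lra.
- by case: k => [[|[|[|k]]] hk] //=; lra.
- by case: j => [[|[|j]] hj] //=; have := muz_q th; lra.
Qed.

Variable W : belief R n -> R.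
Hypothesis W_blackwell : forall rho rho' : fdist R n,
  is_post_dist mu rho -> is_post_dist mu rho' -> mpc rho' rho ->
  expect rho' W <= expect rho W.

Lemma blackwell_split : 2 * W q <= W mu + W z.
Proof.
have := W_blackwell split_fine_post_dist split_coarse_post_dist split_mpc.
by rewrite /expect !big_ord_recr !big_ord0 /=; lra.
Qed.

End BlackwellSplit.

Section BetValue.
Variables (R : realType) (n : nat) (phi : belief R n -> belief R n).
Variables (mu y : belief R n).
Hypotheses (muS : in_simplex mu) (yS : in_simplex y) (mu_y : mu <> y).

Definition bet_value g x : R := EU x (bet g (bet_choice g (phi x))).

Lemma bet_value_segment (r t : R) : r < 0 -> 0 <= t <= 1 ->
  phi (mix mu y r) = (fun i => t * mix mu y r i + (1 - t) * mu i) ->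
  bet_value (sep_payoff mu y) (mix mu y r) = 0.
Proof.
move=> r_lt0 /andP[t_ge0 t_le1] phi_r; rewrite /bet_value phi_r.
by rewrite mix_shrink bet_choice_sep_mix // EU_bet ifN //; nra.
Qed.

Lemma bet_value_prior :
  phi mu = y -> bet_value (sep_payoff mu y) mu = - (sqdist mu y / 2).
Proof.
move=> phi_mu; rewrite /bet_value phi_mu -[X in bet_choice _ X](mix1 mu y).
rewrite bet_choice_sep_mix // EU_bet ifT; last lra.
by rewrite -{1}(mix0 mu y) EU_sep_payoff_mix //; lra.
Qed.

End BetValue.

Theorem lemma2 (R : realType) (n : nat) (mu : belief R n)
  (phi : belief R n -> belief R n) :
  (2 <= n)%N ->
  in_relint mu ->
  (forall x, in_simplex x -> in_simplex (phi x)) ->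
  respects_blackwell phi mu ->
  phi mu <> mu ->
  exists x : belief R n, [/\ in_simplex x, x <> mu & expansive_error phi mu x].
Proof.
move=> _ [muS mu_gt0] phiS RB phimu_mu; apply: contrapT => no_expansion.
set y := phi mu; have yS : in_simplex y by apply: phiS.
have mu_y : mu <> y by apply: nesym.
have [m /andP[m_gt0 m_le1] m_le] := pos_lower_bound mu_gt0.
have mixS r : - m <= r <= 1 -> in_simplex (mix mu y r).
  exact: mix_in_simplex muS yS m_le.
pose W := bet_value phi (sep_payoff mu y).
have W_left r : - m <= r < 0 -> W (mix mu y r) = 0.
  move=> /andP[mr r_lt0]; have rS : in_simplex (mix mu y r) by apply: mixS; lra.
  have /contrapT[t [t01 phi_r]] : ~ expansive_error phi mu (mix mu y r).
    move=> err; apply: no_expansion; exists (mix mu y r); split=> //.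
    by move/(mix_eq_left mu_y); lra.
  exact: bet_value_segment phi_r.
have d_gt0 := sqdist_gt0 mu_y.
suff : 2 * W (mix mu y (- (m / 2))) <= W mu + W (mix mu y (- m)).
  by rewrite !W_left /W ?bet_value_prior //; lra.
apply: (blackwell_split (p := mix mu y (m / 2)) muS).
- by apply: mixS; lra.
- by apply: mixS; lra.
- by apply: mixS; lra.
- by move=> i; rewrite /mix; ring.
- by move=> i; rewrite /mix; field.
- exact: RB _ _ _ bool_compact (@bet_continuous R n _)
    (fun z _ => bet_choice_optimal _ z).
Qed.
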